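(* Let $0<s<t\le1$, let $\mathbf x_t\in\mathsf X$ with $p_t(\mathbf x_t)>0$, and let $(\mathbf x_s,\mathbf u_s)\in\mathsf X\times\mathsf X$. Then $$\sum_{\mathbf u_t\in\mathsf X}\bar p_{s|t}\big((\mathbf x_s,\mathbf u_s)\mid(\mathbf x_t,\mathbf u_t)\big)\,\rho_t(\mathbf u_t\mid\mathbf x_t)=p_{s|t}(\mathbf x_s\mid\mathbf x_t)\,\rho_s(\mathbf u_s\mid\mathbf x_s).$$ If $p_s(\mathbf x_s)=0$, the right-hand side is interpreted as $0$.
   Context: **UDM setup.** - Let $K\ge2$, $L\ge1$ and $\mathsf V=\{1,\dots,K\}$. Tokens are identified with the standard basis vectors of $\mathbb R^K$, and $\mathbf 1$ is the all-ones vector. - $\mathsf X=\mathsf V^L$, with $\mathbf x^\ell$ the $\ell$-th token. $p_0$ is a distribution on $\mathsf X$. - The schedule $\alpha:[0,1]\to[0,1]$ is strictly decreasing, with $\alpha_0=1$ and $\alpha_t\in(0,1)$ for $t\in(0,1]$. Set $\alpha_{t|s}=\alpha_t/\alpha_s$. - The UDM forward kernel is $q_{t|s}(\mathbf x_t\mid\mathbf x_s)=\prod_\ell\langle\mathbf x_t^\ell,\alpha_{t|s}\mathbf x_s^\ell+(1-\alpha_{t|s})\mathbf 1/K\rangle$. - $p_t(\mathbf x)=\sum_{\mathbf x_0}p_0(\mathbf x_0)q_{t|0}(\mathbf x\mid\mathbf x_0)$. - UDM reverse kernel: $p_{s|t}(\mathbf x_s\mid\mathbf x_t)=p_s(\mathbf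 x_s)q_{t|s}(\mathbf x_t\mid\mathbf x_s)/p_t(\mathbf x_t)$. - UDM bridge: $q_{s|0,t}(\mathbf x_s\mid\mathbf x_0,\mathbf x_t)=q_{t|s}(\mathbf x_t\mid\mathbf x_s)q_{s|0}(\mathbf x_s\mid\mathbf x_0)/q_{t|0}(\mathbf x_t\mid\mathbf x_0)$. **Absorbing lifting.** - For $\mathbf u\in\mathsf X$, define $q_{t|0}(\mathbf x_t\mid\mathbf x_0,\mathbf u)=\prod_\ell\langle\mathbf x_t^\ell,\alpha_t\mathbf x_0^\ell+(1-\alpha_t)\mathbf u^\ell\rangle$. - $p_t(\mathbf x\mid\mathbf u)=\sum_{\mathbf x_0}p_0(\mathbf x_0)q_{t|0}(\mathbf x\mid\mathbf x_0,\mathbf u)$. - Noise-conditioned denoiser: $p_{0|t}(\mathbf x_0\mid\mathbf x_t,\mathbf u)=p_0(\mathbf x_0)q_{t|0}(\mathbf x_t\mid\mathbf x_0,\mathbf u)/p_t(\mathbf x_t\mid\mathbf u)$, defined when $p_t(\mathbf x_t\mid\mathbf u)>0$. - $\rho_t(\mathbf u\mid\mathbf x_t):=K^{-L}p_t(\mathbf x_t\mid\mathbf u)/p_t(\mathbf x_t)$. This is the posterior of $\mathbf u$ under a uniform prior on $\mathsf X$. **Resampling law.** - $r_s(\mathbf u_s\mid\mathbf x_0,\mathbf x_s):=K^{-L}q_{s|0}(\mathbf x_s\mid\mathbf x_0,\mathbf u_s)/q_{s|0}(\mathbf x_s\mid\mathbf x_0)$. - Explicitly, it is the product over $\ell$ of: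 $\mathrm{Cat}(\mathbf u_s^\ell;\mathbf x_s^\ell)$ if $\mathbf x_s^\ell\ne\mathbf x_0^\ell$, and $\mathrm{Cat}\big(\mathbf u_s^\ell;\frac{\alpha_s\mathbf 1+(1-\alpha_s)\mathbf x_0^\ell}{1+(K-1)\alpha_s}\big)$ if $\mathbf x_s^\ell=\mathbf x_0^\ell$. **Lifted kernel.** $$\bar p_{s|t}((\mathbf x_s,\mathbf u_s)\mid(\mathbf x_t,\mathbf u_t)):=\sum_{\mathbf x_0}r_s(\mathbf u_s\mid\mathbf x_0,\mathbf x_s)\,q_{s|0,t}(\mathbf x_s\mid\mathbf x_0,\mathbf x_t)\,p_{0|t}(\mathbf x_0\mid\mathbf x_t,\mathbf u_t).$$ *)

From mathcomp Require Import all_boot all_order all_algebra.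
Set Implicit Arguments. Unset Strict Implicit. Unset Printing Implicit Defensive.
Import Order.TTheory GRing.Theory Num.Theory.
Local Open Scope ring_scope.

Section UDM.
Variables (R : realFieldType) (K L : nat).

(* Token set V = {1..K} is 'I_K (token k <-> k-th standard basis vector);
   sequence space X = V^L. *)
Definition X := {ffun 'I_L -> 'I_K}.

Definition schedule (alpha : R -> R) : Prop :=
  [/\ forall a b, 0 <= a -> a < b -> b <= 1 -> alpha b < alpha a,
      forall t, 0 <= t <= 1 -> 0 <= alpha t <= 1,
      alpha 0 = 1 &
      forall t, 0 < t <= 1 -> 0 < alpha t < 1].

Definition distr (p0 : X -> R) : Prop :=
  (forall x, 0 <= p0 x) /\ \sum_(x : X) p0 x = 1.

(* <e_a, c e_b + (1-c) 1/K> *)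
Definition tokUDM (c : R) (a b : 'I_K) : R :=
  c * (a == b)%:R + (1 - c) / K%:R.

Definition alpha_cond (alpha : R -> R) (t s : R) : R := alpha t / alpha s.

Definition q_fwd (alpha : R -> R) (t s : R) (xt xs : X) : R :=
  \prod_(l < L) tokUDM (alpha_cond alpha t s) (xt l) (xs l).

Definition p_marg (alpha : R -> R) (p0 : X -> R) (t : R) (x : X) : R :=
  \sum_(x0 : X) p0 x0 * q_fwd alpha t 0 x x0.

Definition p_rev (alpha : R -> R) (p0 : X -> R) (s t : R) (xs xt : X) : R :=
  p_marg alpha p0 s xs * q_fwd alpha t s xt xs / p_marg alpha p0 t xt.

Definition q_bridge (alpha : R -> R) (s t : R) (xs x0 xt : X) : R :=
  q_fwd alpha t s xt xs * q_fwd alpha s 0 xs x0 / q_fwd alpha t 0 xt x0.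

Definition q_abs (alpha : R -> R) (t : R) (xt x0 u : X) : R :=
  \prod_(l < L) (alpha t * (xt l == x0 l)%:R + (1 - alpha t) * (xt l == u l)%:R).

Definition p_abs (alpha : R -> R) (p0 : X -> R) (t : R) (x u : X) : R :=
  \sum_(x0 : X) p0 x0 * q_abs alpha t x x0 u.

(* p_{0|t}(x0 | xt, u); only meaningful when p_t(xt|u) > 0
   (otherwise the MathComp convention y/0 = 0 applies). *)
Definition p_den (alpha : R -> R) (p0 : X -> R) (t : R) (x0 xt u : X) : R :=
  p0 x0 * q_abs alpha t xt x0 u / p_abs alpha p0 t xt u.

Definition unif_w : R := (K%:R ^+ L)^-1.

Definition rho (alpha : R -> R) (p0 : X -> R) (t : R) (u xt : X) : R :=
  unif_w * p_abs alpha p0 t xt u / p_marg alpha p0 t xt.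

Definition r_res (alpha : R -> R) (s : R) (us x0 xs : X) : R :=
  unif_w * q_abs alpha s xs x0 us / q_fwd alpha s 0 xs x0.

Definition pbar (alpha : R -> R) (p0 : X -> R) (s t : R) (xs us xt ut : X) : R :=
  \sum_(x0 : X) r_res alpha s us x0 xs * q_bridge alpha s t xs x0 xt
                * p_den alpha p0 t x0 xt ut.

End UDM.

From mathcomp Require Import all_boot all_order all_algebra.
From mathcomp Require Import ring.
Set Implicit Arguments. Unset Strict Implicit.
Import Order.TTheory GRing.Theory Num.Theory.
Local Open Scope ring_scope.

(* Averaging the absorbing-noise kernel over a uniform noise recovers the
   uniform-noise kernel: K^-L * sum_u q_{t|0}(x | x0, u) = q_{t|0}(x | x0).
   Hence summing the lifted kernel against rho_t(. | x_t) turns the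
   noise-conditioned denoiser into p0(x0) q_{t|0}(x_t | x0) / p_t(x_t); the
   resampling law r_s then cancels the factor q_{s|0}(x_s | x0) of the bridge,
   and what is left is q_{t|s}(x_t | x_s) K^-L p_s(x_s | u_s) / p_t(x_t),
   which is the right-hand side once p_s(x_s) is cancelled. *)

Section AbsorbingKernel.
Variables (R : realFieldType) (K L : nat) (alpha : R -> R).
Hypotheses (K_gt0 : (0 < K)%N) (alpha0 : alpha 0 = 1).

Lemma q_fwd_from0 t (x x0 : X K L) :
  q_fwd alpha t 0 x x0 = \prod_(l < L) tokUDM (alpha t) (x l) (x0 l).
Proof. by rewrite /q_fwd /alpha_cond alpha0 divr1. Qed.

Lemma tokUDM_gt0 (c : R) (a b : 'I_K) : 0 <= c < 1 -> 0 < tokUDM c a b.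
Proof.
move=> /andP[c_ge0 c_lt1]; rewrite /tokUDM.
apply: ltr_pwDr; last by rewrite mulr_ge0 ?ler0n.
by rewrite divr_gt0 ?subr_gt0 ?ltr0n.
Qed.

Lemma q_fwd_from0_gt0 t (x x0 : X K L) :
  0 <= alpha t < 1 -> 0 < q_fwd alpha t 0 x x0.
Proof.
by move=> alpha_t; rewrite q_fwd_from0; apply: prodr_gt0 => l _; apply: tokUDM_gt0.
Qed.

Lemma q_abs_ge0 t (x x0 u : X K L) :
  0 <= alpha t <= 1 -> 0 <= q_abs alpha t x x0 u.
Proof.
move=> /andP[a_ge0 a_le1]; apply: prodr_ge0 => l _.
by rewrite addr_ge0 // mulr_ge0 ?ler0n ?subr_ge0.
Qed.

(* Expand the product of sums over tokens into a sum over noise sequences. *)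
Lemma unif_w_sum_q_abs t (x x0 : X K L) :
  unif_w R K L * \sum_(u : X K L) q_abs alpha t x x0 u = q_fwd alpha t 0 x x0.
Proof.
rewrite q_fwd_from0 /q_abs.
rewrite -(bigA_distr_bigA (fun (l : 'I_L) (j : 'I_K) =>
  alpha t * (x l == x0 l)%:R + (1 - alpha t) * (x l == j)%:R)) /=.
have -> : unif_w R K L = \prod_(l < L) K%:R^-1.
  by rewrite prodr_const card_ord exprVn.
rewrite -big_split /=; apply: eq_bigr => l _.
rewrite big_split /= sumr_const card_ord -big_distrr /=.
rewrite (bigD1 (x l)) //= eqxx big1 => [|j /negbTE]; last by rewrite eq_sym => ->.
have K_neq0 : K%:R != 0 :> R by rewrite pnatr_eq0 -lt0n.
by rewrite /tokUDM addr0 mulr1 -mulr_natr; field.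
Qed.

Lemma r_res_mul_q_bridge s t (xs us x0 xt : X K L) :
  q_fwd alpha s 0 xs x0 != 0 -> q_fwd alpha t 0 xt x0 != 0 ->
  r_res alpha s us x0 xs * q_bridge alpha s t xs x0 xt * q_fwd alpha t 0 xt x0
  = unif_w R K L * q_abs alpha s xs x0 us * q_fwd alpha t s xt xs.
Proof.
by move=> qs_neq0 qt_neq0; rewrite /r_res /q_bridge; field; rewrite qs_neq0 qt_neq0.
Qed.

End AbsorbingKernel.

Section LiftedKernel.
Variables (R : realFieldType) (K L : nat) (alpha : R -> R) (p0 : X K L -> R).
Hypotheses (K_gt0 : (0 < K)%N) (alpha0 : alpha 0 = 1) (p0_ge0 : forall x, 0 <= p0 x).

(* When p_t(x_t | u) = 0 both sides vanish, so no positivity of p_t(. | u)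
   is needed. *)
Lemma p_den_mul_rho t (x0 xt u : X K L) :
  0 <= alpha t <= 1 -> p_marg alpha p0 t xt != 0 ->
  p_den alpha p0 t x0 xt u * rho alpha p0 t u xt
  = unif_w R K L * (p0 x0 * q_abs alpha t xt x0 u) / p_marg alpha p0 t xt.
Proof.
move=> alpha_t pt_neq0; rewrite /p_den /rho.
have [pabs_eq0|pabs_neq0] := eqVneq (p_abs alpha p0 t xt u) 0; last first.
  by field; rewrite pabs_neq0 pt_neq0.
suff -> : p0 x0 * q_abs alpha t xt x0 u = 0 by rewrite pabs_eq0 !(mulr0, mul0r).
move: pabs_eq0 => /psumr_eq0P; apply => // y _.
by rewrite mulr_ge0 ?q_abs_ge0.
Qed.

Lemma sum_pbar_mul_rho s t (xs us xt : X K L) :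
  0 <= alpha s < 1 -> 0 <= alpha t < 1 -> p_marg alpha p0 t xt != 0 ->
  \sum_(ut : X K L) pbar alpha p0 s t xs us xt ut * rho alpha p0 t ut xt
  = unif_w R K L * q_fwd alpha t s xt xs * p_abs alpha p0 s xs us
    / p_marg alpha p0 t xt.
Proof.
move=> alpha_s alpha_t pt_neq0.
have alpha_t_le1 : 0 <= alpha t <= 1 by case/andP: alpha_t => -> /ltW.
rewrite /pbar; under eq_bigr do rewrite big_distrl /=.
rewrite /p_abs big_distrr mulr_suml exchange_big /=; apply: eq_bigr => x0 _.
under eq_bigr do rewrite -mulrA p_den_mul_rho //.
set w := unif_w R K L; set pt := p_marg alpha p0 t xt.
set a := r_res _ _ _ _ _ * _.
have -> : \sum_ut a * (w * (p0 x0 * q_abs alpha t xt x0 ut) / pt)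
    = p0 x0 / pt * (a * (w * \sum_ut q_abs alpha t xt x0 ut)).
  by rewrite !big_distrr; apply: eq_bigr => ut _ /=; ring.
rewrite unif_w_sum_q_abs // /a r_res_mul_q_bridge ?gt_eqF ?q_fwd_from0_gt0 //.
by rewrite -/w; ring.
Qed.

Lemma p_abs_eq0_of_p_marg_eq0 s (xs us : X K L) :
  0 <= alpha s < 1 -> p_marg alpha p0 s xs = 0 -> p_abs alpha p0 s xs us = 0.
Proof.
move=> alpha_s /psumr_eq0P ps_eq0; rewrite /p_abs big1 // => x0 _.
have q_gt0 y : 0 < q_fwd alpha s 0 xs y by apply: q_fwd_from0_gt0.
have /eqP := ps_eq0 (fun y _ => mulr_ge0 (p0_ge0 y) (ltW (q_gt0 y))) x0 isT.
by rewrite mulf_eq0 (gt_eqF (q_gt0 x0)) orbF => /eqP ->; rewrite mul0r.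
Qed.

End LiftedKernel.

Theorem mainTheorem6 (R : realFieldType) (K L : nat) (alpha : R -> R)
    (p0 : X K L -> R) (s t : R) (xt xs us : X K L) :
  (2 <= K)%N -> (1 <= L)%N ->
  schedule alpha -> distr p0 ->
  0 < s -> s < t -> t <= 1 ->
  0 < p_marg alpha p0 t xt ->
  \sum_(ut : X K L) pbar alpha p0 s t xs us xt ut * rho alpha p0 t ut xt
  = (if p_marg alpha p0 s xs == 0 then 0
     else p_rev alpha p0 s t xs xt * rho alpha p0 s us xs).
Proof.
move=> K_ge2 _ [_ _ alpha0 alpha_in01] [p0_ge0 _] s_gt0 s_lt_t t_le1 pt_gt0.
have K_gt0 : (0 < K)%N by apply: leq_trans K_ge2.
have alpha_lt1 r : 0 < r <= 1 -> 0 <= alpha r < 1.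
  by move/alpha_in01 => /andP[/ltW -> ->].
have alpha_s : 0 <= alpha s < 1.
  by apply: alpha_lt1; rewrite s_gt0 (ltW (lt_le_trans s_lt_t t_le1)).
have alpha_t : 0 <= alpha t < 1.
  by apply: alpha_lt1; rewrite (lt_trans s_gt0 s_lt_t).
rewrite sum_pbar_mul_rho ?(gt_eqF pt_gt0) //.
have [ps_eq0|ps_neq0] := eqVneq (p_marg alpha p0 s xs) 0.
  by rewrite (p_abs_eq0_of_p_marg_eq0 K_gt0 alpha0 p0_ge0 us alpha_s ps_eq0)
    mulr0 mul0r.
by rewrite /p_rev /rho; field; rewrite ps_neq0 gt_eqF.
Qed.
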